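(* Let $E$ be a real affine space of finite dimension, let $\mathcal P$ be a Yao-Yao partition of $E$ and let $x$ be its center. Then every affine half-space of $E$ of the form $\{y\in E: \ell(y)\ge 0\}$, with $\ell$ an affine form on $E$ satisfying $\ell(x)\ge 0$, contains an element of $\mathcal P$.
   Context: $\vec E$ denotes the vector space associated with $E$. A partition of $E$ is a collection $\mathcal P$ of subsets of $E$ with $\bigcup\mathcal P=E$ such that the interiors of any two distinct elements of $\mathcal P$ are disjoint. Yao-Yao partitions and their centers are defined by induction on the dimension: if $E=\{x\}$ has dimension $0$, the Yao-Yao partition of $E$ is $\{\{x\}\}$, with center $x$. If $\dim E=n\ge 1$, $\mathcal P$ is a Yao-Yao partition of $E$ with center $x$ if there exist an affine hyperplane $F$ of $E$, a vector $v\in\vec E\setminus\vec F$ and two Yao-Yao partitions $\mathcal P_1,\mathcal P_{-1}$ of $F$ having the same center $x$, such that $\mathcal P=\{A+\mathbb R_- v : A\in\mathcal P_{-1}\}\cup\{A+\mathbb R_+ v: A\in\mathcal P_1\}$. *)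

From HB Require Import structures.
From mathcomp Require Import all_boot all_order all_algebra.
From mathcomp Require Import classical_sets reals.
Set Implicit Arguments. Unset Strict Implicit. Unset Printing Implicit Defensive.
Import Order.TTheory GRing.Theory Num.Theory.
Local Open Scope ring_scope.
Local Open Scope classical_set_scope.

(* A finite-dimensional real affine space of dimension n is modelled by
   'rV[R]_n.  An affine hyperplane F of 'rV_(n.+1) is parametrized by an
   injective affine map  phi z = a + z *m L  from 'rV_n (L of full row rank n);
   Yao-Yao partitions of F are transported from 'rV_n along phi. *)

Definition aff_param (R : realType) n (a : 'rV[R]_n.+1) (L : 'M[R]_(n, n.+1))
  (z : 'rV[R]_n) : 'rV[R]_n.+1 := a + z *m L.

(* A + R_- v  and  A + R_+ v  (A subset of F, given as phi(A')) *)
Definition ray_minus (R : realType) n a (L : 'M[R]_(n, n.+1)) (v : 'rV[R]_n.+1)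
  (A : set 'rV[R]_n) : set 'rV[R]_n.+1 :=
  [set y | exists z t, A z /\ t <= 0 /\ y = aff_param a L z + t *: v].

Definition ray_plus (R : realType) n a (L : 'M[R]_(n, n.+1)) (v : 'rV[R]_n.+1)
  (A : set 'rV[R]_n) : set 'rV[R]_n.+1 :=
  [set y | exists z t, A z /\ 0 <= t /\ y = aff_param a L z + t *: v].

Inductive YaoYao (R : realType) : forall n, set (set 'rV[R]_n) -> 'rV[R]_n -> Prop :=
| YaoYao0 (x : 'rV[R]_0) : YaoYao [set [set x]] x
| YaoYaoS n (a : 'rV[R]_n.+1) (L : 'M[R]_(n, n.+1)) (v : 'rV[R]_n.+1)
    (P1 Pm1 : set (set 'rV[R]_n)) (c : 'rV[R]_n) :
    row_free L ->                      (* F = a + rowspace L is a hyperplane *)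
    ~~ (v <= L)%MS ->                  (* v not in the direction of F *)
    YaoYao P1 c -> YaoYao Pm1 c ->
    YaoYao ([set ray_minus a L v A | A in Pm1] `|` [set ray_plus a L v A | A in P1])
           (aff_param a L c).

Definition affine_form (R : realType) n (l : 'rV[R]_n -> R) : Prop :=
  exists (u : 'cV[R]_n) (b : R), forall y, l y = (y *m u) 0 0 + b.

From HB Require Import structures.
From mathcomp Require Import all_boot all_order all_algebra.
From mathcomp Require Import classical_sets reals.
Set Implicit Arguments. Unset Strict Implicit. Unset Printing Implicit Defensive.
Import Order.TTheory GRing.Theory Num.Theory.
Local Open Scope ring_scope.
Local Open Scope classical_set_scope.

(* Restricted to the hyperplane F, the form l is
   still affine and nonnegative at the common center c of P1 and P-1, so both
   partitions of F contain a cell on which l >= 0.  Along the direction v, l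
   changes at a constant rate s: if s >= 0 take the cell of P1 swept towards
   +v, otherwise the cell of P-1 swept towards -v. *)

Lemma affine_form_along (R : realType) (n : nat) (l : 'rV[R]_n -> R)
    (v : 'rV[R]_n) :
  affine_form l -> exists s, forall w t, l (w + t *: v) = l w + t * s.
Proof.
move=> [u [b lE]]; exists ((v *m u) 0 0) => w t.
by rewrite !lE mulmxDl -scalemxAl !mxE addrAC.
Qed.

Lemma affine_form_aff_param (R : realType) (n : nat) (l : 'rV[R]_n.+1 -> R)
    (a : 'rV[R]_n.+1) (L : 'M[R]_(n, n.+1)) :
  affine_form l -> affine_form (fun z => l (aff_param a L z)).
Proof.
move=> [u [b lE]]; exists (L *m u), ((a *m u) 0 0 + b) => z.
by rewrite lE /aff_param mulmxDl mulmxA !mxE addrCA addrA.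
Qed.

Section Rays.
Context {R : realType} {n : nat} {a : 'rV[R]_n.+1} {L : 'M[R]_(n, n.+1)}.
Context {v : 'rV[R]_n.+1} {l : 'rV[R]_n.+1 -> R} {s : R}.
Hypothesis l_along : forall w t, l (w + t *: v) = l w + t * s.
Context {A : set 'rV[R]_n}.
Hypothesis A_ge0 : A `<=` [set z | 0 <= l (aff_param a L z)].

Lemma ray_plus_ge0 : 0 <= s -> ray_plus a L v A `<=` [set y | 0 <= l y].
Proof.
move=> s_ge0 _ [z [t [Az [t_ge0 ->]]]] /=; rewrite l_along.
by rewrite addr_ge0 ?mulr_ge0 //; exact: A_ge0.
Qed.

Lemma ray_minus_ge0 : s <= 0 -> ray_minus a L v A `<=` [set y | 0 <= l y].
Proof.
move=> s_le0 _ [z [t [Az [t_le0 ->]]]] /=; rewrite l_along.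
by rewrite addr_ge0 ?mulr_le0 //; exact: A_ge0.
Qed.

End Rays.

Lemma YaoYao_halfspace (R : realType) (n : nat) (P : set (set 'rV[R]_n))
    (x : 'rV[R]_n) :
  YaoYao P x -> forall l : 'rV[R]_n -> R, affine_form l -> 0 <= l x ->
  exists A, P A /\ A `<=` [set y | 0 <= l y].
Proof.
elim=> {n P x} [x|n a L v P1 Pm1 c _ _ _ IH1 _ IHm1] l l_aff lx.
  by exists [set x]; split => // y ->.
have [s l_along] := affine_form_along v l_aff.
have lF_aff := affine_form_aff_param a L l_aff.
have [s_ge0|s_lt0] := leP 0 s.
- have [A [P1A A_ge0]] := IH1 _ lF_aff lx.
  exists (ray_plus a L v A); split; first by right; exists A.
  exact: (ray_plus_ge0 l_along A_ge0 s_ge0).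
- have [A [Pm1A A_ge0]] := IHm1 _ lF_aff lx.
  exists (ray_minus a L v A); split; first by left; exists A.
  exact: (ray_minus_ge0 l_along A_ge0 (ltW s_lt0)).
Qed.

Theorem proposition4 (R : realType) (n : nat) (P : set (set 'rV[R]_n))
  (x : 'rV[R]_n) (l : 'rV[R]_n -> R) :
  YaoYao P x ->
  affine_form l ->
  (exists y z, l y != l z) ->
  0 <= l x ->
  exists A, P A /\ A `<=` [set y | 0 <= l y].
Proof.
by move=> YP l_aff _ lx; exact: YaoYao_halfspace YP l l_aff lx.
Qed.
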